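(* Let $0\le i\le m-1$, let $u\in I_i$, and let $j\ge m-i$. Then $$\mathrm{ord}_p\big(p^j\gamma_{i,j}\big)-\frac{\deg(p^ju)}{p-1}\ \ge\ p^{\,j-(m-i)+1}-1.$$
   Context: Let $p$ be a prime, $q=p^a$, and let $W_m$ be the Witt vectors of length $m$. Write $f\in W_m(\mathbb{F}_q[x_1^{\pm1},\dots,x_n^{\pm1}])$ uniquely as $f=\sum_{i=0}^{m-1}\sum_{u\in I_i}\lambda_i(a_{iu}x^u)$, where $\lambda_i$ places an element in the $i$-th Witt coordinate and zeros elsewhere, $I_i\subset\mathbb{Z}^n$ is finite and $a_{iu}\in\mathbb{F}_q^\times$. Let $\Delta$ be the convex hull of $\{p^{m-i-1}u:u\in I_i\}\cup\{0\}$, assumed $n$-dimensional, and let $\deg(u)=\min\{c\ge0:u\in c\Delta\}$. Let $\mathrm{ord}_p(p)=1$, let $E(t)=\exp(\sum_{i\ge0}t^{p^i}/p^i)$, and fix a primitive $p^m$-th root of unity $\zeta$. For $l=1,\dots,m$, $\pi_l$ is the unique root of $\sum_{i\ge0}t^{p^i}/p^i=0$ with $\mathrm{ord}_p\pi_l=\frac1{p^{l-1}(p-1)}$ and $E(\pi_l)=\zeta^{p^{m-l}}$. Define $$\gamma_{i,j}=\sum_{l=0}^{j}\frac{\pi_{m-i}^{p^l}}{p^l}.$$ *)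

From HB Require Import structures.
From mathcomp Require Import all_boot all_order all_algebra.
From mathcomp Require Import boolp classical_sets reals constructive_ereal.
Set Implicit Arguments. Unset Strict Implicit. Unset Printing Implicit Defensive.
Import Order.TTheory GRing.Theory Num.Theory.
Local Open Scope ring_scope.
Local Open Scope classical_set_scope.

Definition is_ordp (K : fieldType) (R : realDomainType) (p : nat)
    (ord : K -> \bar R) : Prop :=
  [/\ forall x, (ord x == +oo%E) = (x == 0),
      forall x, x != 0 -> ord x \is a fin_num,
      forall x y, ord (x * y)%R = (ord x + ord y)%E,
      forall x y, (Order.min (ord x) (ord y) <= ord (x + y)%R)%E &
      ord p%:R = 1%:E ].

Definition ord_series_conv (K : fieldType) (R : realDomainType)
    (ord : K -> \bar R) (s : nat -> K) (L : K) : Prop :=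
  forall M : R, exists N : nat, forall k : nat, (N <= k)%N ->
    (M%:E <= ord (\sum_(l < k) s l - L)%R)%E.

(* Truncation (up to degree n, harmlessly including higher terms) of
   sum_{i>=0} t^(p^i)/p^i. *)
Definition AH_log_poly (p n : nat) : {poly rat} :=
  \sum_(i < n.+1) ((p ^ i)%:R)^-1 *: 'X^(p ^ i).

(* n-th coefficient of the Artin-Hasse exponential
   E(t) = exp(sum_{i>=0} t^(p^i)/p^i) as a formal power series:
   [t^n] sum_k g^k / k!, where only k <= n contributes. *)
Definition AH_coef (p n : nat) : rat :=
  \sum_(k < n.+1) ((AH_log_poly p n) ^+ k)`_n / (k`!)%:R.

(* Generators of Delta: the points p^(m-i-1) u, u in I_i, 0 <= i <= m-1,
   viewed in R^n. (Delta is their convex hull together with 0.) *)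
Definition Delta_gens (R : realType) (n p m : nat)
    (I : nat -> seq 'rV[int]_n) : seq 'rV[R]_n :=
  flatten [seq [seq (p ^ (m - i - 1))%:R *: map_mx (fun z : int => z%:~R) u
               | u <- I i] | i <- iota 0 m].

(* x lies in c * conv(S u {0}). *)
Definition in_scaled_hull (R : realType) (n : nat) (S : seq 'rV[R]_n)
    (c : R) (x : 'rV[R]_n) : Prop :=
  exists lam : nat -> R,
    [/\ forall k, 0 <= lam k,
        \sum_(k < size S) lam k <= 1 &
        x = c *: \sum_(k < size S) lam k *: S`_k ].

(* conv(S u {0}) is n-dimensional, i.e. S spans R^n. *)
Definition full_dim (R : realType) (n : nat) (S : seq 'rV[R]_n) : Prop :=
  forall x : 'rV[R]_n, exists lam : nat -> R,
    x = \sum_(k < size S) lam k *: S`_k.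

(* deg(x) = min { c >= 0 : x in c Delta } (taken as an infimum; the set is
   closed so this is the minimum whenever it is nonempty). *)
Definition deg_Delta (R : realType) (n : nat) (S : seq 'rV[R]_n)
    (x : 'rV[R]_n) : R :=
  inf [set c : R | 0 <= c /\ in_scaled_hull S c x].

Definition gamma_ij (K : fieldType) (p j : nat) (pi : K) : K :=
  \sum_(l < j.+1) pi ^+ (p ^ l) / (p ^ l)%:R.

From HB Require Import structures.
From mathcomp Require Import all_boot all_order all_algebra.
From mathcomp Require Import boolp classical_sets reals constructive_ereal.
From mathcomp Require Import zify ring lra.
Import Order.TTheory GRing.Theory Num.Theory.
Local Open Scope ring_scope.

(* Write a = ord_p(pi).  Since sum_l pi^(p^l)/p^l = 0, gamma_{i,j} is minus the
   tail l > j of this series, and ord_p(pi^(p^l)/p^l) = p^l a - l is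
   nondecreasing once p^l a >= 1; hence ord_p(gamma_{i,j}) >= p^(j+1) a - (j+1).
   On the other side p^j u = p^(j-(m-i)+1) (p^(m-i-1) u) with p^(m-i-1) u a
   generator of Delta, so deg(p^j u) <= p^(j-(m-i)+1). *)

Definition ord_log_term {R : pzRingType} (p : nat) (a : R) (l : nat) : R :=
  (p ^ l)%:R * a - l%:R.

Section Valuation.
Context {R : realDomainType} {K : fieldType} {p : nat} {ord : K -> \bar R}.
Hypothesis ord_p : is_ordp p ord.

Lemma ord0 : ord 0 = +oo%E.
Proof. by case: ord_p => ord_eqy _ _ _ _; apply/eqP; rewrite ord_eqy. Qed.

Lemma ord_fin x : x != 0 -> ord x = (fine (ord x))%:E.
Proof. by case: ord_p => _ ord_fin_num _ _ _ /ord_fin_num/fineK. Qed.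

Lemma ordM x y : ord (x * y) = (ord x + ord y)%E.
Proof. by case: ord_p. Qed.

Lemma ord1 : ord 1 = 0%E.
Proof.
have := ordM 1 1; rewrite mulr1 ord_fin ?oner_neq0 // -EFinD => -[r_eq].
by congr (_%:E); apply: (@addrI _ (fine (ord 1))); rewrite addr0 -r_eq.
Qed.

Lemma ordN x : ord (- x) = ord x.
Proof.
have ordN1 : ord (-1) = 0%E.
  have := ordM (-1) (-1); rewrite mulrNN mulr1 ord1.
  rewrite ord_fin ?oppr_eq0 ?oner_neq0 // -EFinD -mulr2n => -[/eqP].
  by rewrite eq_sym mulrn_eq0 => /eqP ->.
by rewrite -mulN1r ordM ordN1 add0e.
Qed.

Lemma ordX x n : ord (x ^+ n) = (ord x *+ n)%E.
Proof.
elim: n => [|n IHn]; first by rewrite expr0 ord1.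
by rewrite exprS ordM IHn muleS.
Qed.

Lemma ordV x : x != 0 -> ord x^-1 = (- ord x)%E.
Proof.
move=> x_neq0; have := ordM x x^-1; rewrite divff // ord1.
rewrite [ord x]ord_fin // [ord x^-1]ord_fin ?invr_neq0 // -EFinD -EFinN => -[sum0].
by congr (_%:E); apply/eqP; rewrite -subr_eq0 opprK addrC -sum0.
Qed.

Lemma natp_neq0 : (p%:R : K) != 0.
Proof. by case: ord_p => ord_eqy _ _ _ ord_p1; rewrite -ord_eqy ord_p1. Qed.

Lemma ord_natXp l : ord (p ^ l)%:R = (l%:R)%:E.
Proof. by case: ord_p => _ _ _ _ ord_p1; rewrite natrX ordX ord_p1 -EFin_natmul. Qed.

Lemma ord_sum_ge (T : Type) (r : seq T) (P : pred T) (F : T -> K) (B : R) :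
  (forall i, P i -> (B%:E <= ord (F i))%E) ->
  (B%:E <= ord (\sum_(i <- r | P i) F i))%E.
Proof.
case: ord_p => _ _ _ ord_addr _ F_ge.
apply: (big_ind (fun x => B%:E <= ord x)%E) => //; first by rewrite ord0 leey.
by move=> x y x_ge y_ge; apply: le_trans (ord_addr x y); rewrite le_min x_ge.
Qed.

Lemma ord_partial_sum_ge (s : nat -> K) (j : nat) (B : R) :
  ord_series_conv ord s 0 ->
  (forall l, (j < l)%N -> (B%:E <= ord (s l))%E) ->
  (B%:E <= ord (\sum_(l < j.+1) s l))%E.
Proof.
move=> /(_ B) [N conv_N] tail_ge; set k := maxn N j.+1.
have := conv_N k (leq_maxl _ _).
rewrite subr0 -(big_mkord xpredT s) (big_cat_nat (leq0n j.+1) (leq_maxr N j.+1)).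
rewrite big_mkord /= => sum_ge.
rewrite -[X in ord X](addrK (\sum_(j.+1 <= l < k) s l)).
case: ord_p => _ _ _ ord_addr _; apply: le_trans (ord_addr _ _).
rewrite le_min sum_ge ordN big_nat_cond /=.
by apply: ord_sum_ge => l /andP[/andP[lt_jl _] _]; apply: tail_ge.
Qed.

Lemma ord_log_term_eq {y : K} {a : R} (l : nat) :
  ord y = a%:E -> ord (y ^+ (p ^ l) / (p ^ l)%:R) = (ord_log_term p a l)%:E.
Proof.
move=> ord_y; have p_neq0 := natp_neq0.
rewrite ordM ordV ?natrX ?expf_neq0 // -natrX ordX ord_natXp.
by rewrite ord_y /ord_log_term mulr_natl EFinB !EFin_natmul.
Qed.

End Valuation.

Lemma ord_log_term_mono (R : realFieldType) (p k l : nat) (a : R) :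
  (1 < p)%N -> 1 <= (p ^ k)%:R * a -> (k <= l)%N ->
  ord_log_term p a k <= ord_log_term p a l.
Proof.
move=> p_gt1 + /subnKC <-; set d := (l - k)%N.
have : d%:R + 1 <= (p ^ d)%:R :> R by rewrite natr1 ler_nat ltn_expl.
rewrite /ord_log_term expnD natrM mulrAC natrD.
have : 0 <= d%:R :> R := ler0n _ d.
move: ((p ^ k)%:R * a) ((p ^ d)%:R : R) (d%:R : R) => c pd e e_ge0 pd_ge c_ge1.
nra.
Qed.

Lemma deg_Delta_le (R : realType) (n : nat) (S : seq 'rV[R]_n) (c : R) x :
  0 <= c -> in_scaled_hull S c x -> deg_Delta S x <= c.
Proof. by move=> c_ge0 x_in; apply: ge_inf => //; exists 0 => y []. Qed.

Lemma in_scaled_hull_mem (R : realType) (n : nat) (S : seq 'rV[R]_n) (c : R) g :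
  g \in S -> in_scaled_hull S c (c *: g).
Proof.
move=> g_in_S; have idx_lt : (index g S < size S)%N by rewrite index_mem.
exists (fun k => (k == index g S)%:R); split => [k||]; first by rewrite ler0n.
- rewrite (bigD1 (Ordinal idx_lt)) //= eqxx big1 ?addr0 // => k.
  by rewrite -(inj_eq val_inj) => /negbTE ->.
- rewrite (bigD1 (Ordinal idx_lt)) //= eqxx scale1r big1 ?addr0 ?nth_index //.
  by move=> k; rewrite -(inj_eq val_inj) => /negbTE ->; rewrite scale0r.
Qed.

Lemma mem_Delta_gens (R : realType) (n p m i : nat) (I : nat -> seq 'rV[int]_n) u :
  (i < m)%N -> u \in I i ->
  (p ^ (m - i - 1))%:R *: map_mx (fun z : int => z%:~R) u \in Delta_gens R p m I.
Proof.
move=> lt_im u_in; apply/flatten_mapP; exists i; last exact: map_f.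
by rewrite mem_iota.
Qed.

Lemma deg_Delta_gens_le (R : realType) (n p m i k : nat)
    (I : nat -> seq 'rV[int]_n) u :
  (i < m)%N -> u \in I i -> (m - i - 1 <= k)%N ->
  deg_Delta (Delta_gens R p m I) ((p ^ k)%:R *: map_mx (fun z : int => z%:~R) u)
    <= (p ^ (k - (m - i - 1)))%:R.
Proof.
move=> lt_im u_in le_k; set uR := map_mx _ u.
have <- : (p ^ (k - (m - i - 1)))%:R *: ((p ^ (m - i - 1))%:R *: uR) = (p ^ k)%:R *: uR.
  by rewrite scalerA -natrM -expnD subnK.
exact/deg_Delta_le/in_scaled_hull_mem/mem_Delta_gens.
Qed.

Lemma natrX_div_pred (R : realFieldType) (p k e : nat) : (1 < p)%N ->
  (p ^ (k + e))%:R * ((p ^ k)%:R * (p%:R - 1))^-1 = (p ^ e)%:R / (p%:R - 1) :> R.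
Proof.
move=> p_gt1; have p1_neq0 : p%:R - 1 != 0 :> R by rewrite subr_eq0 pnatr_eq1 gtn_eqF.
rewrite expnD !natrM; field.
by rewrite p1_neq0 pnatr_eq0 expn_eq0 (gtn_eqF (ltnW p_gt1)).
Qed.

Theorem lemma3p7 (R : realType) (K : fieldType) (ord : K -> \bar R)
    (p m n : nat) (I : nat -> seq 'rV[int]_n) (zeta pi : K)
    (i j : nat) (u : 'rV[int]_n) :
  prime p ->
  is_ordp p ord ->
  (p ^ m).-primitive_root zeta ->
  full_dim (Delta_gens R p m I) ->
  (i < m)%N ->
  ord pi = (((p ^ (m - i - 1))%:R * (p%:R - 1))^-1)%:E ->
  ord_series_conv ord (fun k => pi ^+ (p ^ k) / (p ^ k)%:R) 0 ->
  ord_series_conv ord (fun k => ratr (AH_coef p k) * pi ^+ k) (zeta ^+ (p ^ i)) ->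
  u \in I i ->
  (m - i <= j)%N ->
  ((((p ^ (j - (m - i)).+1)%:R - 1)%R)%:E <=
    ord ((p ^ j)%:R * gamma_ij p j pi)%R
    - ((deg_Delta (Delta_gens R p m I)
          ((p ^ j)%:R *: map_mx (fun z : int => z%:~R) u) / (p%:R - 1))%R)%:E)%E.
Proof.
move=> p_prime ord_p _ _ lt_im ord_pi log_pi0 _ u_in le_j.
have p_gt1 := prime_gt1 p_prime.
set a := _^-1 in ord_pi; set Q : R := (p ^ (j - (m - i)).+1)%:R.
have p1_gt0 : 0 < p%:R - 1 :> R by rewrite subr_gt0 ltr1n.
have Q_ge1 : 1 <= Q by rewrite ler1n expn_gt0 ltnW.
have pj1_a : (p ^ j.+1)%:R * a = p%:R * Q / (p%:R - 1).
  have -> : j.+1 = (m - i - 1 + (j - (m - i)).+2)%N by lia.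
  by rewrite natrX_div_pred // expnS natrM.
have gamma_ge : ((ord_log_term p a j.+1)%:E <= ord (gamma_ij p j pi))%E.
  apply: (ord_partial_sum_ge ord_p _ _ _ log_pi0) => l lt_jl.
  rewrite (ord_log_term_eq ord_p l ord_pi) lee_fin ord_log_term_mono // pj1_a.
  rewrite ler_pdivlMr // mul1r; have := ler0n R p; nra.
have deg_le : deg_Delta (Delta_gens R p m I)
    ((p ^ j)%:R *: map_mx (fun z : int => z%:~R) u) <= Q.
  rewrite /Q (_ : (j - (m - i)).+1 = j - (m - i - 1))%N; last by lia.
  by apply: deg_Delta_gens_le => //; lia.
rewrite (ordM ord_p) ord_natXp //; apply: le_trans (leeB (leeD2l _ gamma_ge) (lexx _)).
rewrite -!EFinD lee_fin /ord_log_term pj1_a -natr1.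
set D := deg_Delta _ _ in deg_le *.
have : D / (p%:R - 1) <= Q / (p%:R - 1) by rewrite ler_pM2r ?invr_gt0.
have -> : p%:R * Q / (p%:R - 1) = Q + Q / (p%:R - 1) by field; rewrite gt_eqF.
lra.
Qed.
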